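(* Let $0<d\le n$ be integers with $n$ and $d$ even. Then \[ A_2(n/2,\,d/2)\;\le\; M_1(n,d;1)\;\le\; A_4(n,d). \]
   Context: Sequences are words over the DNA alphabet $\{\mathtt A,\mathtt T,\mathtt C,\mathtt G\}$. Hamming distance between two words of equal length is the number of positions where they differ. For $D>0$, a word is called $D$-GC-prefix-balanced ($D$-GCPB) if for every prefix of it (including the whole word), the absolute difference between the number of symbols from $\{\mathtt G,\mathtt C\}$ and the number of symbols from $\{\mathtt A,\mathtt T\}$ in that prefix is at most $D$; a set of words is $D$-GCPB if all its words are. For $0<d\le n$ and $D>0$, $M_1(n,d;D)$ denotes the maximum size of a $D$-GCPB set of words of length $n$ over $\{\mathtt A,\mathtt T,\mathtt C,\mathtt G\}$ with minimum pairwise Hamming distance at least $d$. For an integer $q>1$, $A_q(n,d)$ denotes the maximum size of a code of length $n$ over a $q$-ary alphabet with minimum Hamming distance $d$. *)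

From HB Require Import structures.
From mathcomp Require Import all_boot all_order all_algebra.
Set Implicit Arguments. Unset Strict Implicit. Unset Printing Implicit Defensive.
Import Order.TTheory GRing.Theory Num.Theory.

Inductive nucl := nA | nT | nC | nG.

Definition nucl_to_ord (x : nucl) : 'I_4 :=
  match x with nA => @inord 3 0 | nT => @inord 3 1 | nC => @inord 3 2 | nG => @inord 3 3 end.
Definition ord_to_nucl (i : 'I_4) : nucl :=
  match val i with 0 => nA | 1 => nT | 2 => nC | _ => nG end.
Lemma nuclK : cancel nucl_to_ord ord_to_nucl.
Proof. by case; rewrite /ord_to_nucl /= inordK. Qed.
HB.instance Definition _ := Finite.copy nucl (can_type nuclK).

Definition is_GC (x : nucl) : bool := (x == nC) || (x == nG).

Definition word (T : Type) (n : nat) := {ffun 'I_n -> T}.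

Definition hamming (T : eqType) (n : nat) (u v : {ffun 'I_n -> T}) : nat :=
  #|[set i : 'I_n | u i != v i]|.

Definition min_dist_ge (T : finType) (n d : nat) (C : {set {ffun 'I_n -> T}}) : bool :=
  [forall u in C, forall v in C, (u != v) ==> (d <= hamming u v)].

Definition GCPB (D : nat) (n : nat) (w : {ffun 'I_n -> nucl}) : bool :=
  [forall k : 'I_n.+1,
    let gc := #|[set i : 'I_n | (i < k) && is_GC (w i)]| in
    let ta := #|[set i : 'I_n | (i < k) && ~~ is_GC (w i)]| in
    (`|(gc%:Z - ta%:Z)%R| <= D)%N].

Definition GCPB_set (D n : nat) (C : {set {ffun 'I_n -> nucl}}) : bool :=
  [forall w in C, GCPB D w].

Definition M1 (n d D : nat) : nat :=
  \max_(C : {set {ffun 'I_n -> nucl}} | GCPB_set D C && min_dist_ge d C) #|C|.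

Definition A_q (q n d : nat) : nat :=
  \max_(C : {set {ffun 'I_n -> 'I_q}} | min_dist_ge d C) #|C|.

From mathcomp Require Import all_boot all_order all_algebra.
Set Implicit Arguments. Unset Strict Implicit. Unset Printing Implicit Defensive.

(* Relabelling A, T, C, G as 0, 1, 2, 3 turns a GC-prefix-balanced code into a
   quaternary code with the same distances.  Conversely, writing each bit of a
   binary code as AC (bit 0) or CA (bit 1) doubles every Hamming distance, and
   every even-length prefix of the resulting DNA word is exactly GC-balanced,
   so every prefix is unbalanced by at most one. *)

Lemma card_ord_count n (P : pred nat) :
  #|[set i : 'I_n | P i]| = count P (iota 0 n).
Proof.
rewrite cardsE cardE /enum_mem size_filter -enumT -val_enum_ord count_map.
by apply: eq_count => i; rewrite inE.
Qed.

Lemma card_ord_prefix n k (P : pred nat) : k <= n ->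
  #|[set i : 'I_n | (i < k) && P i]| = count P (iota 0 k).
Proof.
move=> le_kn; rewrite (card_ord_count _ (fun i => (i < k) && P i)).
rewrite -(subnKC le_kn) iotaD count_cat add0n.
have -> : count (fun i => (i < k) && P i) (iota k (n - k)) = 0.
  rewrite -(count_pred0 (iota k (n - k))); apply: eq_in_count => i.
  by rewrite mem_iota => /andP[/leq_gtF->].
by rewrite addn0; apply: eq_in_count => i; rewrite mem_iota => /andP[_ ->].
Qed.

Lemma count_iota_half (P : pred nat) m :
  count (fun i => P i./2) (iota 0 m.*2) = (count P (iota 0 m)).*2.
Proof.
elim: m => [//|m IHm].
rewrite doubleS -addn2 -[m.+1]addn1 !iotaD !count_cat IHm doubleD /=.
by rewrite add0n doubleK uphalf_double addn0 addnn.
Qed.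

Lemma count_iota_pairs (P : pred nat) t :
  (forall j, P j.*2 != P j.*2.+1) -> count P (iota 0 t.*2) = t.
Proof.
move=> P_alt; elim: t => [//|t IHt].
rewrite doubleS -addn2 iotaD count_cat IHt add0n /=.
by case: (P t.*2) (P t.*2.+1) (P_alt t) => -[]; rewrite ?addn0 ?addn1.
Qed.

Lemma count_iota_balanced (P : pred nat) k :
  (forall j, P j.*2 != P j.*2.+1) ->
  `|((count P (iota 0 k))%:Z - (count (predC P) (iota 0 k))%:Z)%R| <= 1.
Proof.
move=> P_alt.
have notP_alt j : (predC P) j.*2 != (predC P) j.*2.+1.
  by rewrite /= (inj_eq negb_inj).
rewrite -(odd_double_half k) addnC iotaD !count_cat !count_iota_pairs //.
by case: (odd k); rewrite /= ?distnn //; case: (P _); rewrite /= ?distnDl.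
Qed.

Lemma hamming_eq0 (T : finType) n (u v : {ffun 'I_n -> T}) :
  (hamming u v == 0) = (u == v).
Proof.
rewrite /hamming cards_eq0; apply/eqP/eqP => [uv | ->]; last first.
  by apply/setP => i; rewrite !inE eqxx.
by apply/ffunP => i; apply/eqP/negPn/negbT; rewrite -(in_set0 i) -uv inE.
Qed.

Lemma hamming_map (T T' : finType) (f : T -> T') n (u v : {ffun 'I_n -> T}) :
  injective f -> hamming [ffun i => f (u i)] [ffun i => f (v i)] = hamming u v.
Proof. by move=> f_inj; apply: eq_card => i; rewrite !inE !ffunE (inj_eq f_inj). Qed.

Lemma min_dist_ge_imset (T T' : finType) n n' d d'
    (f : {ffun 'I_n -> T} -> {ffun 'I_n' -> T'}) (C : {set {ffun 'I_n -> T}}) :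
  (forall u v, d <= hamming u v -> d' <= hamming (f u) (f v)) ->
  min_dist_ge d C -> min_dist_ge d' (f @: C).
Proof.
move=> f_dist /forall_inP C_dist.
apply/forall_inP => _ /imsetP[u uC ->]; apply/forall_inP => _ /imsetP[v vC ->].
apply/implyP => fuv; apply: f_dist.
have /forall_inP/(_ v vC)/implyP := C_dist u uC; apply.
by apply: contraNneq fuv => ->.
Qed.

Lemma M1_le_A4 n d D : M1 n d D <= A_q 4 n d.
Proof.
apply/bigmax_leqP => C /andP[_ C_dist].
pose relabel (w : {ffun 'I_n -> nucl}) := [ffun i => nucl_to_ord (w i)].
have nucl_inj := can_inj nuclK.
have relabel_inj : injective relabel.
  move=> u v /ffunP uv; apply/ffunP => i.
  by apply: nucl_inj; have := uv i; rewrite !ffunE.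
rewrite -(card_imset C relabel_inj); apply: leq_bigmax_cond.
by apply: min_dist_ge_imset C_dist => u v; rewrite hamming_map.
Qed.

Definition bit m (u : {ffun 'I_m -> 'I_2}) (j : nat) : bool :=
  if insub j is Some o then odd (u o) else false.

Lemma bitE m (u : {ffun 'I_m -> 'I_2}) (j : 'I_m) : bit u j = odd (u j).
Proof. by rewrite /bit valK. Qed.

Lemma odd_ord2_inj : injective (fun x : 'I_2 => odd x).
Proof. by do 2![case=> [[|[|//]] ?]] => //= _; apply/val_inj. Qed.

Lemma is_GC_nC : is_GC nC. Proof. by rewrite /is_GC eqxx. Qed.

Lemma is_GC_nA : ~~ is_GC nA. Proof. by apply/norP; split; apply/eqP. Qed.

Lemma nC_nA_inj : injective (fun b : bool => if b then nC else nA).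
Proof. by do 2!case. Qed.

Definition pair_enc m (u : {ffun 'I_m -> 'I_2}) : {ffun 'I_(m.*2) -> nucl} :=
  [ffun i : 'I_(m.*2) => if bit u i./2 (+) odd i then nC else nA].

Lemma hamming_pair_enc m (u v : {ffun 'I_m -> 'I_2}) :
  hamming (pair_enc u) (pair_enc v) = (hamming u v).*2.
Proof.
have -> : hamming u v = count (fun j => bit u j != bit v j) (iota 0 m).
  rewrite /hamming -card_ord_count; apply: eq_card => j.
  by rewrite !inE !bitE (inj_eq odd_ord2_inj).
rewrite -count_iota_half /hamming -card_ord_count; apply: eq_card => i.
by rewrite !inE !ffunE (inj_eq nC_nA_inj) (inj_eq (@addIb _)).
Qed.

Lemma pair_enc_GCPB m (u : {ffun 'I_m -> 'I_2}) : GCPB 1 (pair_enc u).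
Proof.
apply/forallP => k /=; have le_k : k <= m.*2 by rewrite -ltnS.
pose P i := bit u i./2 (+) odd i.
have GC_enc i : is_GC (pair_enc u i) = P i.
  by rewrite ffunE /P; case: (_ (+) _); rewrite ?is_GC_nC ?(negPf is_GC_nA).
have -> : #|[set i : 'I_(m.*2) | (i < k) && is_GC (pair_enc u i)]|
          = count P (iota 0 k).
  by rewrite -(card_ord_prefix _ le_k); apply: eq_card => i; rewrite !inE GC_enc.
have -> : #|[set i : 'I_(m.*2) | (i < k) && ~~ is_GC (pair_enc u i)]|
          = count (predC P) (iota 0 k).
  by rewrite -(card_ord_prefix _ le_k); apply: eq_card => i; rewrite !inE GC_enc.
apply: count_iota_balanced => j.
by rewrite /P /= uphalf_double doubleK odd_double; case: (bit u j).
Qed.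

Lemma A2_le_M1 m e : A_q 2 m e <= M1 m.*2 e.*2 1.
Proof.
apply/bigmax_leqP => C C_dist.
have enc_inj : injective (@pair_enc m).
  move=> u v enc_uv; apply/eqP; rewrite -hamming_eq0 -double_eq0.
  by rewrite -hamming_pair_enc enc_uv hamming_eq0.
rewrite -(card_imset C enc_inj); apply: leq_bigmax_cond; apply/andP; split.
  by apply/forall_inP => _ /imsetP[u _ ->]; apply: pair_enc_GCPB.
by apply: min_dist_ge_imset C_dist => u v; rewrite hamming_pair_enc leq_double.
Qed.

Theorem theorem2 (n d : nat) :
  0 < d <= n -> ~~ odd n -> ~~ odd d ->
  A_q 2 n./2 d./2 <= M1 n d 1 <= A_q 4 n d.
Proof.
move=> _ even_n even_d; rewrite M1_le_A4 andbT.
rewrite -[in M1 n _ _](even_halfK even_n) -[in M1 _ d _](even_halfK even_d).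
exact: A2_le_M1.
Qed.
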